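(* Let $\mathcal{C}$ be a translation based cipher over $V=(\mathbb{F}_2)^{mn}$ with $m\ge3$ and $n\ge2$. Suppose that there is a brick $\gamma_i$ (acting on $V_i$) of the bricklayer transformation of a proper round $h$ such that $$\mathrm{Alt}(V_i)\subseteq\langle T(V_i),\ \gamma_iT(V_i)\gamma_i^{-1}\rangle.$$ If $\Gamma_h(\mathcal{C})$ is primitive, then it is not of affine type, i.e. $\Gamma_h(\mathcal{C})$ is not contained in $\mathrm{AGL}(mn,2)$ (the affine group of $V$).
   Context: Permutations act on the right. Let $m,n>1$ and $V=V_1\oplus\dots\oplus V_n$ with each $V_i\cong(\mathbb{F}_2)^m$. For $v$ in a vector space $X$, $\sigma_v$ is $x\mapsto x+v$ and $T(X)=\{\sigma_v:v\in X\}$. A bricklayer transformation is a permutation $\gamma$ of $V$ with permutations (''bricks'') $\gamma_i$ of $V_i$ such that $(v_1+\dots+v_n)\gamma=v_1\gamma_1+\dots+v_n\gamma_n$. A wall is a nontrivial proper subspace of $V$ that is a sum of some $V_i$; $\lambda\in\mathrm{GL}(V)$ is a proper mixing layer if no wall is $\lambda$-invariant. A tb cipher $\mathcal{C}=\{\tau_k:k\in\mathcal{K}\}$ has $\tau_k=\tau_{k,1}\cdots\tau_{k,l}$ with $\tau_{k,h}=\gamma_h\lambda_h\sigma_{\phi(k,h)}$, $\gamma_h$ a key-independent bricklayer transformation with $0\gamma_h=0$, $\lambda_h\in\mathrm{GL}(V)$ key-independent, $\phi:\mathcal{K}\times\{1,\dots,l\}\to V$; a round $h$ is proper if $\lambda_h$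 is a proper mixing layer and $k\mapsto\phi(k,h)$ is onto $V$, and a tb cipher has at least one proper round. $\Gamma_h(\mathcal{C})=\langle\tau_{k,h}:k\in\mathcal{K}\rangle$. *)

From HB Require Import structures.
From Stdlib Require Import ClassicalEpsilon.
From mathcomp Require Import all_boot all_order all_algebra all_fingroup all_solvable.
Set Implicit Arguments. Unset Strict Implicit. Unset Printing Implicit Defensive.
Import GRing.Theory.
Local Open Scope ring_scope.

(* A vector of V is a finite function  'I_n -> 'rV['F_2]_m  listing its brick
   components; V_i is identified with the vectors supported on brick i.
   Permutations are mathcomp {perm _}; mathcomp composition satisfies
   (s * t) x = t (s x), i.e. permutations act on the right, as in the paper. *)

Definition brick (m : nat) := 'rV['F_2]_m.
Definition VT (n m : nat) := {ffun 'I_n -> brick m}.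

Lemma transl_inj (n m : nat) (v : VT n m) : injective (fun x : VT n m => x + v).
Proof. by move=> x y; apply: addIr. Qed.
Definition transl (n m : nat) (v : VT n m) : {perm VT n m} := perm (@transl_inj n m v).

Lemma btransl_inj (m : nat) (v : brick m) : injective (fun x : brick m => x + v).
Proof. by move=> x y; apply: addIr. Qed.
Definition btransl (m : nat) (v : brick m) : {perm brick m} := perm (@btransl_inj m v).

Definition bTransl (m : nat) : {set {perm brick m}} := [set btransl v | v in brick m].
Definition Transl (n m : nat) : {set {perm VT n m}} := [set transl v | v in VT n m].

Definition GLV (n m : nat) : {set {perm VT n m}} :=
  [set p : {perm VT n m} |
     [forall a : 'F_2, forall x : VT n m, forall y : VT n m,
        p (a *: x + y) == a *: p x + p y]].

Definition AGLV (n m : nat) : {set {perm VT n m}} := (GLV n m * Transl n m)%g.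

Definition bricklayer_with (n m : nat) (gamma : {perm VT n m})
    (g : 'I_n -> {perm brick m}) : Prop :=
  forall x : VT n m, gamma x = [ffun i => g i (x i)].

Definition is_bricklayer (n m : nat) (gamma : {perm VT n m}) : Prop :=
  exists g : 'I_n -> {perm brick m}, bricklayer_with gamma g.

Definition wall (n m : nat) (S : {set 'I_n}) : {set VT n m} :=
  [set x : VT n m | [forall i, (i \notin S) ==> (x i == 0)]].

(* walls are the sums with S nonempty and proper (these are exactly the
   nontrivial proper subspaces that are sums of some V_i, as m > 0) *)
Definition proper_mixing (n m : nat) (lam : {perm VT n m}) : Prop :=
  lam \in GLV n m /\
  forall S : {set 'I_n}, S != set0 -> S != setT ->
    ~ (forall x, x \in wall m S -> lam x \in wall m S).

Definition pbool (P : Prop) : bool :=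
  if excluded_middle_informative P then true else false.

(* round function tau_{k,h} = gamma_h lambda_h sigma_{phi(k,h)} (right action:
   first gamma_h, then lambda_h, then the translation) *)
Definition round_fun (n m : nat) (K : Type) (gam lam : {perm VT n m})
    (phi : K -> VT n m) (k : K) : {perm VT n m} :=
  (gam * lam * transl (phi k))%g.

Definition Gamma_round (n m : nat) (K : Type) (gam lam : {perm VT n m})
    (phi : K -> VT n m) : {set {perm VT n m}} :=
  <<[set t : {perm VT n m} | pbool (exists k : K, t = round_fun gam lam phi k)]>>%g.

Definition tb_cipher (n m l : nat) (K : Type) (gam lam : 'I_l -> {perm VT n m})
    (phi : K -> 'I_l -> VT n m) : Prop :=
  (forall h, is_bricklayer (gam h)) /\
  (forall h, gam h 0 = 0) /\
  (forall h, lam h \in GLV n m) /\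
  (exists h, proper_mixing (lam h) /\ forall v, exists k, phi k h = v).

Definition proper_round (n m l : nat) (K : Type) (lam : 'I_l -> {perm VT n m})
    (phi : K -> 'I_l -> VT n m) (h : 'I_l) : Prop :=
  proper_mixing (lam h) /\ forall v, exists k, phi k h = v.

From mathcomp Require Import all_boot all_order all_algebra all_fingroup all_solvable.
From mathcomp Require Import zify.
Import GRing.Theory.
Local Open Scope ring_scope.
Set Implicit Arguments.
Unset Strict Implicit.

(* If the round group were affine, the round function of a key with zero round
   key, gamma_h lambda_h, would be an affine map fixing 0, hence linear; so
   gamma_h, and with it every brick gamma_i, would be additive.  Conjugating a
   translation of V_i by an additive brick gives a translation again, so
   < T(V_i), gamma_i T(V_i) gamma_i^-1 > = T(V_i), a group of order 2^m, far
   too small to contain Alt(V_i), whose order is (2^m)!/2. *)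

Lemma GLV_additive n m (p : {perm VT n m}) :
  p \in GLV n m -> {morph p : x y / x + y}.
Proof.
rewrite inE => /forallP /(_ 1) p_lin x y.
by move: p_lin => /forallP /(_ x) /forallP /(_ y) /eqP; rewrite !scale1r.
Qed.

Lemma additive_fun0 {Z : zmodType} {f : Z -> Z} : {morph f : x y / x + y} -> f 0 = 0.
Proof. by move=> f_add; apply: (@addrI _ (f 0)); rewrite addr0 -f_add addr0. Qed.

Lemma transl0 n m : transl (0 : VT n m) = 1%g.
Proof. by apply/permP => x; rewrite !permE /= addr0. Qed.

Lemma AGLV_fix0_additive n m (p : {perm VT n m}) :
  p \in AGLV n m -> p 0 = 0 -> {morph p : x y / x + y}.
Proof.
case/mulsgP=> a _ /GLV_additive a_add /imsetP [w _ ->] -> p0 x y.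
have w0 : w = 0 by move: p0; rewrite permM permE /= (additive_fun0 a_add) add0r.
by rewrite w0 transl0 mulg1 a_add.
Qed.

Lemma comp_GLV_additive n m (gam lam : {perm VT n m}) :
  lam \in GLV n m -> gam 0 = 0 -> (gam * lam)%g \in AGLV n m ->
  {morph gam : x y / x + y}.
Proof.
move=> /GLV_additive lam_add gam0 gl_affine x y.
have gl0 : (gam * lam)%g 0 = 0 by rewrite permM gam0 (additive_fun0 lam_add).
have gl_add := AGLV_fix0_additive gl_affine gl0.
by apply: (perm_inj (s := lam)); rewrite lam_add -!permM gl_add.
Qed.

Lemma bricklayer_brick_additive n m (gam : {perm VT n m}) (g : 'I_n -> {perm brick m}) :
  bricklayer_with gam g -> {morph gam : x y / x + y} ->
  forall i, {morph g i : u v / u + v}.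
Proof.
move=> gam_g gam_add i u v.
pose e (z : brick m) : VT n m := [ffun j => if j == i then z else 0].
have := congr1 (fun f : VT n m => f i) (gam_add (e u) (e v)).
by rewrite /= !gam_g !ffunE eqxx.
Qed.

Lemma bTransl_group m : group_set (bTransl m).
Proof.
apply/group_setP; split.
  by apply/imsetP; exists 0 => //; apply/permP => x; rewrite !permE /= addr0.
move=> _ _ /imsetP [u _ ->] /imsetP [v _ ->].
by apply/imsetP; exists (u + v) => //; apply/permP => z; rewrite permM !permE /= addrA.
Qed.

Canonical bTransl_groupType m := Group (bTransl_group m).

Lemma conj_bTransl_sub m (s : {perm brick m}) :
  {morph s : u v / u + v} -> [set (s * t * s^-1)%g | t in bTransl m] \subset bTransl m.
Proof.
move=> s_add; apply/subsetP => _ /imsetP [_ /imsetP [v _ ->] ->].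
apply/imsetP; exists (s^-1%g v) => //; apply/permP => z.
rewrite !permM /btransl ![perm (@btransl_inj _ _) _]permE /=.
by rewrite -{1}(permKV s v) -s_add permK.
Qed.

Lemma double_lt_fact N : (4 <= N)%N -> (2 * N < N`!)%N.
Proof.
elim: N => // N IH; rewrite leq_eqVlt => /orP [/eqP <- // | N4].
by rewrite factS; have := IH N4; move: N4; nia.
Qed.

Lemma card_Alt_gt (T : finType) : (4 <= #|T|)%N -> (#|T| < #|('Alt_T)%g|)%N.
Proof.
move=> T4; have := double_lt_fact T4.
by rewrite -(card_Alt (leq_trans _ T4)) // ltn_mul2l.
Qed.

Lemma Alt_not_sub_bTransl m : (2 <= m)%N -> ~~ ('Alt_(brick m) \subset bTransl m)%g.
Proof.
move=> m2; apply/negP => /subset_leq_card AltT.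
have cardV : #|brick m| = (2 ^ m)%N by rewrite card_mx card_Fp // mul1n.
have V4 : (4 <= #|brick m|)%N by rewrite cardV (leq_trans _ (leq_pexp2l _ m2)).
have := card_Alt_gt V4; rewrite ltnNge.
by rewrite (leq_trans AltT) ?leq_imset_card.
Qed.

Theorem proposition4p2 (m n l : nat) (K : Type)
    (gam lam : 'I_l -> {perm VT n m}) (phi : K -> 'I_l -> VT n m)
    (h : 'I_l) (g : 'I_n -> {perm brick m}) (i : 'I_n) :
  (3 <= m)%N -> (2 <= n)%N ->
  tb_cipher gam lam phi ->
  proper_round lam phi h ->
  bricklayer_with (gam h) g ->
  ('Alt_(brick m) \subset
     << bTransl m :|: [set (g i * t * (g i)^-1)%g | t in bTransl m] >>)%g ->
  [primitive Gamma_round (gam h) (lam h) (fun k => phi k h), on [set: VT n m] | 'P] ->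
  ~~ (Gamma_round (gam h) (lam h) (fun k => phi k h) \subset AGLV n m).
Proof.
move=> m3 _ [_ [gam0 [lamGL _]]] [_ onto] gam_g AltS _.
apply/negP => /subsetP GammaA.
have [k phik0] := onto 0.
have glG : (gam h * lam h)%g \in Gamma_round (gam h) (lam h) (fun k => phi k h).
  apply: mem_gen; rewrite inE /pbool.
  case: ClassicalEpsilon.excluded_middle_informative => // -[]; exists k.
  by rewrite /round_fun phik0 transl0 mulg1.
have gam_add := comp_GLV_additive (lamGL h) (gam0 h) (GammaA _ glG).
have gi_add := bricklayer_brick_additive gam_g gam_add i.
have gen_sub : << bTransl m :|: [set (g i * t * (g i)^-1)%g | t in bTransl m] >>%g
                 \subset bTransl m.
  rewrite (gen_subG _ (bTransl_groupType m)) subUset subxx /=.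
  exact: conj_bTransl_sub.
by have /negP := Alt_not_sub_bTransl (ltnW m3); apply; apply: subset_trans AltS gen_sub.
Qed.
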